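(* Consider the Bayesian setting described in the context. For any deterministic auction that satisfies (VP), (NPT), and (IC) ex-post (where bidders may misreport their valuation arbitrarily and their budget only downward), together with the budget constraints $P_i(\vec v,\vec b)\le b_i$ and the size constraints $x_i(\vec v,\vec b)\le\kappa_i$, the interim quantities $x_{ikm}$ and $P_{ikm}$ of the auction form a feasible solution of the linear program below. In particular, the optimal LP value is an upper bound on the expected revenue of the revenue-maximizing such auction. LP: maximize $\sum_{i,k,m}f_{ikm}P_{ikm}$ subject to $\sum_{i,k,m}f_{ikm}x_{ikm}\le1$; $s_kx_{ikm}-P_{ikm}\ge s_kx_{ilt}-P_{ilt}$ for all $i,k,l$ and all $t<m$; $s_kx_{ikm}-P_{ikm}\ge0$ for all $i,k,m$; $P_{ikm}\in[0,\beta_m]$ and $x_{ikm}\in[0,\kappa_i]$ for all $i,k,m$.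
   Context: There are $n$ bidders and one unit of an infinitely divisible good. Bidder $i$ has a private valuation per unit taking values in $0=s_0\le s_1<s_2<\dots<s_K$, a private budget taking values in $0=\beta_0\le\beta_1<\dots<\beta_M$, and a public size constraint $\kappa_i$ (the maximum amount it wants). The auctioneer knows independent (across bidders) distributions $f_{ikm}=\Pr[v_i=s_k\text{ and }b_i=\beta_m]$. A deterministic auction maps reported $(\vec v,\vec b)$ to allocations $x_i(\vec v,\vec b)$ and prices $P_i(\vec v,\vec b)$, with $\sum_ix_i\le1$. A bidder's utility is $-\infty$ if the price exceeds the true budget and (true valuation)$\times$(allocation) minus price otherwise. (VP): truthful reporting gives nonnegative utility; (NPT): prices are nonnegative; (IC): truthful reporting maximizes utility, for every report of the other bidders. The interim quantities are $x_{ikm}=\mathbb E_{\vec v_{-i},\vec b_{-i}}[x_i(s_k,\beta_m,\vec v_{-i},\vec b_{-i})]$ and $P_{ikm}=\mathbb E_{\vec v_{-i},\vec b_{-i}}[P_i(s_k,\beta_m,\vec v_{-i},\vec b_{-i})]$, where the other bidders' reports are drawn from their distributions. Expected revenue is $\mathbb E[\sum_iP_i(\vec v,\vec b)]$ with $(\vec v,\vec b)$ drawn from the distributions. *)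

From HB Require Import structures.
From mathcomp Require Import all_boot all_order all_algebra.
Set Implicit Arguments. Unset Strict Implicit. Unset Printing Implicit Defensive.
Import Order.TTheory GRing.Theory Num.Theory.
Local Open Scope ring_scope.

(* A type of bidder i is a pair (k, m) : valuation index k (value s_k) and
   budget index m (budget beta_m).  A profile gives a type to each bidder. *)
Definition profile (n K M : nat) := {ffun 'I_n -> 'I_K.+1 * 'I_M.+1}.

Definition upd (n K M : nat) (q : profile n K M) (i : 'I_n)
  (a : 'I_K.+1 * 'I_M.+1) : profile n K M :=
  [ffun j => if j == i then a else q j].

(* Utility: None stands for -infinity (price exceeds the true budget). *)
Definition utility (R : realFieldType) (v b alloc price : R) : option R :=
  if price <= b then Some (v * alloc - price) else None.

Definition ule (R : realFieldType) (a c : option R) : bool :=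
  match a, c with
  | None, _ => true
  | Some _, None => false
  | Some a, Some c => a <= c
  end.

Section Auction.
Variables (R : realFieldType) (n K M : nat).
Variables (s : 'I_K.+1 -> R) (beta : 'I_M.+1 -> R) (kappa : 'I_n -> R).
Variable (f : 'I_n -> 'I_K.+1 -> 'I_M.+1 -> R).
Variables (x P : profile n K M -> 'I_n -> R).

Definition ftype (i : 'I_n) (a : 'I_K.+1 * 'I_M.+1) : R := f i a.1 a.2.

Definition prob_profile (q : profile n K M) : R := \prod_(j < n) ftype j (q j).

Definition prob_others (i : 'I_n) (q : profile n K M) : R :=
  \prod_(j < n | j != i) ftype j (q j).

Definition x_int (i : 'I_n) (k : 'I_K.+1) (m : 'I_M.+1) : R :=
  \sum_(q : profile n K M | q i == (k, m)) prob_others i q * x q i.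
Definition P_int (i : 'I_n) (k : 'I_K.+1) (m : 'I_M.+1) : R :=
  \sum_(q : profile n K M | q i == (k, m)) prob_others i q * P q i.

Definition expected_revenue : R :=
  \sum_(q : profile n K M) prob_profile q * \sum_(i < n) P q i.

Definition feasible_alloc : Prop :=
  forall q : profile n K M, (forall i, 0 <= x q i) /\ \sum_(i < n) x q i <= 1.
Definition VP : Prop :=
  forall (q : profile n K M) i, ule (Some 0) (utility (s (q i).1) (beta (q i).2) (x q i) (P q i)).
Definition NPT : Prop := forall (q : profile n K M) i, 0 <= P q i.
Definition IC : Prop :=
  forall (q : profile n K M) i (l : 'I_K.+1) (t : 'I_M.+1), (t <= (q i).2)%N ->
    ule (utility (s (q i).1) (beta (q i).2)
                 (x (upd q i (l, t)) i) (P (upd q i (l, t)) i))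
        (utility (s (q i).1) (beta (q i).2) (x q i) (P q i)).
Definition budget_constraint : Prop := forall (q : profile n K M) i, P q i <= beta (q i).2.
Definition size_constraint : Prop := forall (q : profile n K M) i, x q i <= kappa i.

End Auction.

Definition LP_objective (R : realFieldType) (n K M : nat)
  (f : 'I_n -> 'I_K.+1 -> 'I_M.+1 -> R) (Q : 'I_n -> 'I_K.+1 -> 'I_M.+1 -> R) : R :=
  \sum_(i < n) \sum_(k < K.+1) \sum_(m < M.+1) f i k m * Q i k m.

Definition LP_feasible (R : realFieldType) (n K M : nat)
  (s : 'I_K.+1 -> R) (beta : 'I_M.+1 -> R) (kappa : 'I_n -> R)
  (f : 'I_n -> 'I_K.+1 -> 'I_M.+1 -> R)
  (X Q : 'I_n -> 'I_K.+1 -> 'I_M.+1 -> R) : Prop :=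
  [/\ \sum_(i < n) \sum_(k < K.+1) \sum_(m < M.+1) f i k m * X i k m <= 1,
      (forall i k l (m t : 'I_M.+1), (t < m)%N ->
         s k * X i k m - Q i k m >= s k * X i l t - Q i l t),
      (forall i k m, s k * X i k m - Q i k m >= 0),
      (forall i k m, 0 <= Q i k m <= beta m) &
      (forall i k m, 0 <= X i k m <= kappa i)].

From HB Require Import structures.
From mathcomp Require Import all_boot all_order all_algebra.
Import Order.TTheory GRing.Theory Num.Theory.
Local Open Scope ring_scope.
Set Implicit Arguments. Unset Strict Implicit.

(* Both interim quantities are conditional expectations given a bidder's own
   type, so each ex-post constraint of the auction passes to its interim
   version by averaging: a misreport (l, t) of bidder i is compared with the
   truthful report profile by profile, after reindexing the profiles in which
   i reports (l, t) by those in which i reports its true type.  Prices respect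
   the reported budget and budgets are misreported only downward, so both
   prices stay below the true budget and the utilities compared are finite.  The LP objective at the interim prices is the
   expected revenue, by independence of the types. *)

Section Interim.
Variables (R : realFieldType) (n K M : nat).
Variable f : 'I_n -> 'I_K.+1 -> 'I_M.+1 -> R.
Hypothesis f_ge0 : forall i k m, 0 <= f i k m.
Hypothesis f_sum1 : forall i, \sum_(k < K.+1) \sum_(m < M.+1) f i k m = 1.

Local Notation type := ('I_K.+1 * 'I_M.+1)%type.
Local Notation profile := (profile n K M).

Definition interim (G : profile -> R) (i : 'I_n) (a : type) : R :=
  \sum_(q : profile | q i == a) prob_others f i q * G q.

Lemma sum_ftype j : \sum_(c : type) ftype f j c = 1.
Proof. by rewrite -(f_sum1 j) pair_big. Qed.

Lemma prob_profileE (q : profile) i :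
  prob_profile f q = ftype f i (q i) * prob_others f i q.
Proof. by rewrite /prob_profile (bigD1 i). Qed.

Lemma prob_others_ge0 i (q : profile) : 0 <= prob_others f i q.
Proof. by apply: prodr_ge0 => j _; apply: f_ge0. Qed.

Lemma sum_prob_profile : \sum_(q : profile) prob_profile f q = 1.
Proof. by rewrite /prob_profile -bigA_distr_bigA big1 // => j _; apply: sum_ftype. Qed.

Lemma sum_prob_others i a : \sum_(q : profile | q i == a) prob_others f i q = 1.
Proof.
pose F j (c : type) := if j == i then (c == a)%:R else ftype f j c.
have prodF (q : profile) : \prod_(j < n) F j (q j) = (q i == a)%:R * prob_others f i q.
  rewrite (bigD1 i) //= /F eqxx; congr (_ * _).
  by apply: eq_bigr => j /negbTE ->.
rewrite big_mkcond /=.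
transitivity (\sum_(q : profile) \prod_(j < n) F j (q j)).
  by apply: eq_bigr => q _; rewrite prodF; case: ifP; rewrite ?mul1r ?mul0r.
rewrite -bigA_distr_bigA big1 // => j _; rewrite /F.
case: eqP => _; last exact: sum_ftype.
by rewrite (bigD1 a) //= eqxx big1 ?addr0 // => c /negbTE ->.
Qed.

Lemma interim_const c i a : interim (fun=> c) i a = c.
Proof. by rewrite /interim -mulr_suml sum_prob_others mul1r. Qed.

Lemma le_interim (G H : profile -> R) i a :
  (forall q : profile, q i = a -> G q <= H q) -> interim G i a <= interim H i a.
Proof.
move=> GH; apply: ler_sum => q /eqP qa.
by apply: ler_wpM2l; [apply: prob_others_ge0 | apply: GH].
Qed.

Lemma interim_bounded (G : profile -> R) lo hi i a :
  (forall q : profile, q i = a -> lo <= G q <= hi) -> lo <= interim G i a <= hi.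
Proof.
move=> bnd; apply/andP; split.
  by rewrite -[lo](interim_const lo i a); apply: le_interim => q /bnd /andP[].
by rewrite -[hi](interim_const hi i a); apply: le_interim => q /bnd /andP[].
Qed.

Lemma interim_affine c (F G : profile -> R) i a :
  interim (fun q => c * F q - G q) i a = c * interim F i a - interim G i a.
Proof.
rewrite /interim mulr_sumr -sumrB; apply: eq_bigr => q _.
by rewrite mulrBr mulrCA.
Qed.

Definition swap_report i (a b : type) (q : profile) : profile :=
  [ffun j => if j == i then
     (if q i == a then b else if q i == b then a else q i) else q j].

Lemma swap_reportK i a b : involutive (swap_report i a b).
Proof.
move=> q; apply/ffunP => j; rewrite !ffunE.
case: eqP => [->|//]; rewrite !eqxx.
case: (eqVneq (q i) a) => [qa|qa].
  by case: (eqVneq b a) => [->|_]; rewrite ?qa ?eqxx.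
case: (eqVneq (q i) b) => [qb|qb]; first by rewrite eqxx qb.
by rewrite ifN // ifN.
Qed.

Lemma interim_upd (G : profile -> R) i a b :
  interim G i b = interim (fun q => G (upd q i b)) i a.
Proof.
rewrite /interim (reindex_inj (can_inj (swap_reportK i a b))) /=.
have swap_i q : (swap_report i a b q i == b) = (q i == a).
  rewrite ffunE eqxx; case: ifP => [_|qa]; first by rewrite eqxx.
  by case: ifP => // /eqP qb; rewrite -qb eq_sym qa.
apply: eq_big => q; first exact: swap_i.
rewrite swap_i => /eqP qa; congr (_ * _).
  by apply: eq_bigr => j /negbTE ji; rewrite ffunE ji.
by congr G; apply/ffunP => j; rewrite !ffunE qa eqxx; case: eqP.
Qed.

Lemma sum_interim (G : profile -> 'I_n -> R) :
  \sum_(i < n) \sum_(k < K.+1) \sum_(m < M.+1)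
      f i k m * interim (G^~ i) i (k, m)
  = \sum_(q : profile) prob_profile f q * \sum_(i < n) G q i.
Proof.
under [RHS]eq_bigr do rewrite mulr_sumr.
rewrite [RHS]exchange_big /=; apply: eq_bigr => i _; rewrite pair_big /=.
transitivity (\sum_(c : type) \sum_(q : profile | q i == c)
                prob_profile f q * G q i).
  apply: eq_bigr => -[k m] _; rewrite mulr_sumr; apply: eq_bigr => q /eqP qi.
  by rewrite (prob_profileE q i) qi mulrA.
rewrite (exchange_big_dep xpredT) //=; apply: eq_bigr => q _.
by rewrite (big_pred1 (q i)) // => c; rewrite eq_sym.
Qed.

End Interim.

Lemma utility_ule_sub (R : realFieldType) (v b a a' p p' : R) :
  p <= b -> p' <= b -> ule (utility v b a' p') (utility v b a p) ->
  v * a' - p' <= v * a - p.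
Proof. by rewrite /utility => -> ->. Qed.

Section Auction.
Variables (R : realFieldType) (n K M : nat).
Variables (s : 'I_K.+1 -> R) (beta : 'I_M.+1 -> R) (kappa : 'I_n -> R).
Variable f : 'I_n -> 'I_K.+1 -> 'I_M.+1 -> R.
Variables (x P : profile n K M -> 'I_n -> R).
Hypothesis f_ge0 : forall i k m, 0 <= f i k m.
Hypothesis f_sum1 : forall i, \sum_(k < K.+1) \sum_(m < M.+1) f i k m = 1.
Hypothesis beta_le : forall t m : 'I_M.+1, (t < m)%N -> beta t <= beta m.
Hypotheses (x_feas : feasible_alloc x) (x_size : size_constraint kappa x).
Hypotheses (P_VP : VP s beta x P) (P_NPT : NPT P) (P_IC : IC s beta x P).
Hypothesis P_budget : budget_constraint beta P.

Lemma x_int_mass_le1 :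
  \sum_(i < n) \sum_(k < K.+1) \sum_(m < M.+1) f i k m * x_int f x i k m <= 1.
Proof.
rewrite (sum_interim f x) -(sum_prob_profile f_sum1).
apply: ler_sum => q _; apply: ler_piMr; last exact: (x_feas q).2.
by apply: prodr_ge0 => j _; apply: f_ge0.
Qed.

Lemma interim_IC i k l (m t : 'I_M.+1) : (t < m)%N ->
  s k * x_int f x i l t - P_int f P i l t <=
  s k * x_int f x i k m - P_int f P i k m.
Proof.
move=> tm; rewrite /x_int /P_int -!(interim_affine f).
rewrite (interim_upd f _ i (k, m) (l, t)); apply: le_interim => // q qi.
have upd_i : upd q i (l, t) i = (l, t) by rewrite ffunE eqxx.
have t_le : (t <= (q i).2)%N by rewrite qi; apply: ltnW.
have := P_IC l t_le; rewrite qi /=; apply: utility_ule_sub.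
  by have := P_budget q i; rewrite qi.
have := P_budget (upd q i (l, t)) i; rewrite upd_i /= => P_le.
exact: le_trans P_le (beta_le tm).
Qed.

Lemma interim_VP i k m : 0 <= s k * x_int f x i k m - P_int f P i k m.
Proof.
rewrite /x_int /P_int -(interim_affine f) -(interim_const f_sum1 0 i (k, m)).
apply: le_interim => // q qi; have := P_VP q i.
by rewrite /utility P_budget qi /= subr_ge0.
Qed.

Lemma P_int_bounds i k m : 0 <= P_int f P i k m <= beta m.
Proof.
apply: interim_bounded => // q qi; rewrite P_NPT /=.
by have := P_budget q i; rewrite qi.
Qed.

Lemma x_int_bounds i k m : 0 <= x_int f x i k m <= kappa i.
Proof. by apply: interim_bounded => // q _; rewrite (x_feas q).1 x_size. Qed.

Lemma LP_feasible_interim : LP_feasible s beta kappa f (x_int f x) (P_int f P).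
Proof.
split; [exact: x_int_mass_le1 | exact: interim_IC | exact: interim_VP
       | exact: P_int_bounds | exact: x_int_bounds].
Qed.

End Auction.

Lemma LP_objective_P_int (R : realFieldType) (n K M : nat)
    (f : 'I_n -> 'I_K.+1 -> 'I_M.+1 -> R) (P : profile n K M -> 'I_n -> R) :
  LP_objective f (P_int f P) = expected_revenue f P.
Proof. exact: (sum_interim f P). Qed.

Theorem lemma7 (R : realFieldType) (n K M : nat)
  (s : 'I_K.+1 -> R) (beta : 'I_M.+1 -> R) (kappa : 'I_n -> R)
  (f : 'I_n -> 'I_K.+1 -> 'I_M.+1 -> R)
  (x P : profile n K M -> 'I_n -> R)
  (* valuations 0 = s_0 <= s_1 < s_2 < ... < s_K *)
  (hs0 : s ord0 = 0)
  (hs : forall k k' : 'I_K.+1, (0 < k)%N -> (k < k')%N -> s k < s k')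
  (hs01 : forall k : 'I_K.+1, 0 <= s k)
  (* budgets 0 = beta_0 <= beta_1 < ... < beta_M *)
  (hb0 : beta ord0 = 0)
  (hb : forall m m' : 'I_M.+1, (0 < m)%N -> (m < m')%N -> beta m < beta m')
  (hb01 : forall m : 'I_M.+1, 0 <= beta m)
  (hkappa : forall i, 0 <= kappa i)
  (* each f i is a probability distribution on types *)
  (hf0 : forall i k m, 0 <= f i k m)
  (hf1 : forall i, \sum_(k < K.+1) \sum_(m < M.+1) f i k m = 1)
  (* the auction *)
  (hfeas : feasible_alloc x)
  (hVP : VP s beta x P) (hNPT : NPT P) (hIC : IC s beta x P)
  (hbud : budget_constraint beta P) (hsize : size_constraint kappa x) :
  LP_feasible s beta kappa f (x_int f x) (P_int f P) /\
  (forall U : R,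
     (forall X Q, LP_feasible s beta kappa f X Q -> LP_objective f Q <= U) ->
     expected_revenue f P <= U).
Proof.
have beta_le (t m : 'I_M.+1) : (t < m)%N -> beta t <= beta m.
  case: (posnP t) => [t0 _ | t_gt0 tm]; last exact: ltW (hb _ _ t_gt0 tm).
  by rewrite (_ : t = ord0) ?hb0 //; apply: val_inj.
have feas := LP_feasible_interim hf0 hf1 beta_le hfeas hsize hVP hNPT hIC hbud.
split=> // U LP_le; rewrite -LP_objective_P_int; exact: LP_le feas.
Qed.
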